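(* Let $V$ be a real vector space and $X\subseteq V$ infinite. Then the join-semilattice of compact elements of $Co(V,X)$ contains a join-subsemilattice isomorphic to $Co^{<\omega}(\mathbb{N})$ or one isomorphic to $\mathcal{P}^{<\omega}(\mathbb{N})$.
   Context: $Co(V,X)$ is the lattice (under inclusion) of sets $C\cap X$ with $C$ convex in $V$; its compact elements are the sets $\mathrm{conv}(F)\cap X$ with $F\subseteq X$ finite, and they form a join-semilattice. $Co^{<\omega}(\mathbb{N})$ is the join-semilattice of finite intervals of the chain $\mathbb{N}$ ordered by inclusion, and $\mathcal{P}^{<\omega}(\mathbb{N})$ the join-semilattice of finite subsets of $\mathbb{N}$ ordered by inclusion. *)

From HB Require Import structures.
From mathcomp Require Import all_boot all_order all_algebra.
From mathcomp Require Import boolp classical_sets cardinality reals convex.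
Set Implicit Arguments. Unset Strict Implicit. Unset Printing Implicit Defensive.
Import Order.TTheory GRing.Theory Num.Theory.
Local Open Scope classical_set_scope.
Local Open Scope ring_scope.

Definition conv_hull (R : realType) (V : lmodType R) (A : set V) : set V :=
  [set x | forall C : set (convex_lmodType V),
     convex_set C -> A `<=` C -> C x].

Definition Co_compact (R : realType) (V : lmodType R) (X : set V) : set (set V) :=
  [set S | exists F : set V, [/\ finite_set F, F `<=` X & S = conv_hull F `&` X]].

(* Join in the lattice Co(V,X) of two elements A, B (subsets of X):
   the least C ∩ X (C convex) containing A ∪ B, i.e. conv(A ∪ B) ∩ X. *)
Definition Co_join (R : realType) (V : lmodType R) (X : set V) (A B : set V) : set V :=
  conv_hull (A `|` B) `&` X.

(* Co^{<ω}(N): the finite intervals of the chain N (including the empty one). *)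
Definition nat_fin_interval (I : set nat) : Prop :=
  I = set0 \/ exists a b : nat, I = [set k | (a <= k <= b)%N].

Definition interval_join (I J : set nat) : set nat :=
  [set k | exists i j, [/\ (I `|` J) i, (I `|` J) j & (i <= k <= j)%N]].

(* P^{<ω}(N): the finite subsets of N, with join = union. *)
Definition nat_fin_subset (I : set nat) : Prop := finite_set I.

(* Its image is then a
   join-subsemilattice isomorphic to (D, jD). *)
Definition join_embedding (R : realType) (V : lmodType R) (X : set V)
    (D : set (set nat)) (jD : set nat -> set nat -> set nat)
    (f : set nat -> set V) : Prop :=
  [/\ forall I, D I -> Co_compact X (f I),
      forall I J, D I -> D J -> f I = f J -> I = J &
      forall I J, D I -> D J -> f (jD I J) = Co_join X (f I) (f J)].

(* Take an injective sequence y of points of X.  Ramsey's theorem and an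
   induction on the number m of affinely independent points spanning the y_n
   give an infinite subsequence that is either in convex position (no point is
   a convex combination of others) or lies monotonically on a line.  For m = 2
   the points are on a line and Ramsey orders them.  For m >= 3, either the
   homogeneous m-subsets are affinely dependent, and the subsequence spans
   fewer points, or they are independent; then colour the (m+1)-subsets by
   which of their points lies in the hull of the others.  A colour "the t-th
   point is always in the hull" is impossible, by comparing barycentric
   coordinates in m+2 points, and the opposite colours give convex position
   by Caratheodory's theorem.  In convex position, I ↦ conv{y_i | i ∈ I} ∩ X
   embeds the finite subsets of ℕ; on a monotone line it embeds the finite
   intervals. *)

From HB Require Import structures.
From mathcomp Require Import all_boot all_order all_algebra.
From mathcomp Require Import boolp classical_sets cardinality reals convex.
From mathcomp Require Import ring lra zify interval_inference.
Set Implicit Arguments. Unset Strict Implicit. Unset Printing Implicit Defensive.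
Import Order.TTheory GRing.Theory Num.Theory.
Local Open Scope ring_scope.

Lemma sum_if_mem_sub (T : nmodType) (F : nat -> T) (s s' : seq nat) :
  uniq s -> uniq s' -> {subset s <= s'} ->
  \sum_(i <- s') (if i \in s then F i else 0) = \sum_(i <- s) F i.
Proof.
move=> us us' ss'; rewrite -big_mkcond /= -big_filter; apply: perm_big.
apply: uniq_perm; rewrite ?filter_uniq // => i; rewrite mem_filter.
by case si: (i \in s) => //=; rewrite ss'.
Qed.

Lemma sum_if_eq (T : nmodType) (F : nat -> T) (s : seq nat) i :
  uniq s -> i \in s -> \sum_(j <- s) (if j == i then F j else 0) = F i.
Proof. by move=> us si; rewrite -big_mkcond -big_filter filter_pred1_uniq // big_seq1. Qed.

(** * Linear and affine dependence *)

Section LinearDependence.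
Variables (R : fieldType) (W : lmodType R).

Lemma lin_dep_pivot (u : nat -> W) (a c : nat -> R) (i0 : nat) (s : seq nat) :
  uniq s -> i0 \in s -> has (fun i => c i != 0) (rem i0 s) ->
  \sum_(i <- rem i0 s) c i *: (u i - a i *: u i0) = 0 ->
  exists2 d : nat -> R, has (fun i => d i != 0) s & \sum_(i <- s) d i *: u i = 0.
Proof.
move=> us i0s /hasP[i1 i1s ci1] dep.
have notin_rem i : i \in rem i0 s -> (i == i0) = false.
  by rewrite mem_rem_uniq // inE => /andP[/negbTE].
exists (fun i => if i == i0 then - \sum_(j <- rem i0 s) c j * a j else c i).
  by apply/hasP; exists i1; [exact: mem_rem i1s | rewrite notin_rem].
rewrite (big_rem _ i0s) eqxx /= (eq_big_seq (fun i => c i *: u i)); last first.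
  by move=> i /notin_rem ->.
rewrite (eq_bigr (fun i => c i *: u i - (c i * a i) *: u i0)) in dep; last first.
  by move=> i _; rewrite scalerBr scalerA.
move/eqP: dep; rewrite sumrB subr_eq0 => /eqP ->.
by rewrite scaleNr scaler_suml addNr.
Qed.

Lemma lin_dep_of_span (w u : nat -> W) (A : nat -> nat -> R) (sb s : seq nat) :
  uniq s -> (size sb < size s)%N ->
  {in s, forall i, u i = \sum_(k <- sb) A i k *: w k} ->
  exists2 c : nat -> R, has (fun i => c i != 0) s & \sum_(i <- s) c i *: u i = 0.
Proof.
elim: sb => [|k0 sb IH] in u A s *.
  case: s => [//|i0 s] _ _ hu; exists (fun i => (i == i0)%:R).
    by rewrite /= eqxx oner_neq0.
  by rewrite big1_seq // => i /andP[_ /hu ->]; rewrite big_nil scaler0.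
move=> us lt_sb_s hu.
have [[i0 i0s Ai0]|] := pselect (exists2 i0, i0 \in s & A i0 k0 != 0); last first.
  move=> /forall2NP nz; apply: (IH u A s us (ltnW lt_sb_s)) => i si.
  have /negP/negPn/eqP Ai : ~ A i k0 != 0 by case: (nz i) => // /(_ si).
  by rewrite hu // big_cons Ai scale0r add0r.
pose a i := A i k0 / A i0 k0.
have lt_sb_rem : (size sb < size (rem i0 s))%N.
  by rewrite size_rem // -ltnS prednK // (leq_ltn_trans _ lt_sb_s).
have [|c nz dep] := IH (fun i => u i - a i *: u i0)
  (fun i k => A i k - a i * A i0 k) (rem i0 s) (rem_uniq _ us) lt_sb_rem.
  move=> i /mem_rem si; rewrite !hu // !big_cons scalerDr scalerA /a divfK //.
  rewrite opprD addrACA subrr add0r scaler_sumr -sumrB.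
  by apply: eq_bigr => k _; rewrite scalerBl scalerA.
exact: (lin_dep_pivot us i0s nz dep).
Qed.

End LinearDependence.

Section Affine.
Variables (R : fieldType) (V : lmodType R).
Implicit Types (P b : nat -> V) (s : seq nat) (v : V).

Definition affine_comb P s v := exists2 c : nat -> R,
  \sum_(i <- s) c i = 1 & \sum_(i <- s) c i *: P i = v.

Definition affine_indep P s := uniq s /\ forall c : nat -> R,
  \sum_(i <- s) c i = 0 -> \sum_(i <- s) c i *: P i = 0 -> {in s, forall i, c i = 0}.

Lemma affine_comb_mem P s i : uniq s -> i \in s -> affine_comb P s (P i).
Proof.
move=> us si; exists (fun j => if j == i then 1 else 0); first exact: sum_if_eq.
by under eq_bigr do rewrite (fun_if (fun a => a *: P _)) scale1r scale0r; exact: sum_if_eq.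
Qed.

Lemma affine_indep_nil P : affine_indep P [::].
Proof. by split=> // c _ _ i; rewrite in_nil. Qed.

Lemma affine_indep_sub P s s' : affine_indep P s -> uniq s' -> {subset s' <= s} ->
  affine_indep P s'.
Proof.
move=> [us hi] us' ss'; split => // c c0 cP i s'i.
have := hi (fun i => if i \in s' then c i else 0); rewrite sum_if_mem_sub // c0.
under eq_bigr do rewrite (fun_if (fun a => a *: P _)) scale0r.
by rewrite sum_if_mem_sub // cP => /(_ erefl erefl i (ss' _ s'i)); rewrite s'i.
Qed.

Lemma affine_indep_perm P s s' : perm_eq s s' -> affine_indep P s -> affine_indep P s'.
Proof.
move=> pss' hi; have [us _] := hi.
apply: (affine_indep_sub hi); first by rewrite -(perm_uniq pss').
by move=> i; rewrite (perm_mem pss').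
Qed.

Lemma affine_coord_unique P s (c d : nat -> R) : affine_indep P s ->
  \sum_(i <- s) c i = \sum_(i <- s) d i ->
  \sum_(i <- s) c i *: P i = \sum_(i <- s) d i *: P i -> {in s, c =1 d}.
Proof.
move=> [_ hi] /eqP cd /eqP cdP i si; apply/eqP; rewrite -subr_eq0.
apply/eqP/(hi (fun i => c i - d i)) => //; first by rewrite sumrB; apply/eqP; rewrite subr_eq0.
by under eq_bigr do rewrite scalerBl; rewrite sumrB; apply/eqP; rewrite subr_eq0.
Qed.

Lemma affine_indep_consN P s n :
  affine_comb P s (P n) -> n \notin s -> ~ affine_indep P (n :: s).
Proof.
move=> [c c1 cP] ns [_ hi].
pose e j := if j == n then -1 else c j.
have eE : {in s, e =1 c} by move=> j js; rewrite /e ifN_eq //; apply: contraNneq ns => <-.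
have en : e n = -1 by rewrite /e eqxx.
have := hi e; rewrite !big_cons en (eq_big_seq _ eE).
rewrite (eq_big_seq (fun j => c j *: P j)) => [|j /eE ->//].
rewrite c1 cP addNr scaleN1r addNr => /(_ erefl erefl n (mem_head _ _)) /eqP.
by rewrite en oppr_eq0 oner_eq0.
Qed.

Lemma affine_comb_of_dep P s j (c : nat -> R) : c j != 0 ->
  \sum_(i <- j :: s) c i = 0 -> \sum_(i <- j :: s) c i *: P i = 0 ->
  affine_comb P s (P j).
Proof.
rewrite !big_cons => cj0 /eqP; rewrite addrC addr_eq0 => /eqP c0.
move/eqP; rewrite addrC addr_eq0 => /eqP cP.
exists (fun i => - c i / c j); first by rewrite -mulr_suml sumrN c0 opprK divff.
under eq_bigr do rewrite mulrC -scalerA.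
by rewrite -scaler_sumr; under eq_bigr do rewrite scaleNr; rewrite sumrN cP opprK scalerA mulVf ?scale1r.
Qed.

Lemma affine_indep_cons P s n :
  affine_indep P s -> ~ affine_comb P s (P n) -> affine_indep P (n :: s).
Proof.
move=> [us hi] na; have ns : n \notin s.
  by apply: contra_notN na => ns; exact: affine_comb_mem.
split=> [|c c0 cP]; first by rewrite /= ns.
have cn : c n = 0 by apply: contra_notP na => /eqP cn; exact: affine_comb_of_dep cn c0 cP.
move: c0 cP; rewrite !big_cons cn add0r scale0r add0r => c0 cP i.
by rewrite inE => /predU1P[-> //|]; apply: hi.
Qed.

Lemma affine_depP P s : uniq s -> ~ affine_indep P s ->
  exists c : nat -> R, [/\ \sum_(i <- s) c i = 0, \sum_(i <- s) c i *: P i = 0 &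
    exists2 j, j \in s & c j != 0].
Proof.
move=> us; apply: contra_notP => nodep; split=> // c c0 cP j js.
by apply: contra_notP nodep => /eqP cj; exists c; split => //; exists j.
Qed.

Lemma affine_dep_of_span b sb P s : uniq s -> (size sb < size s)%N ->
  {in s, forall i, affine_comb b sb (P i)} -> ~ affine_indep P s.
Proof.
move=> us lt_sb_s hb [_ hi].
have /choice[A hA] : forall i, exists A : nat -> R, i \in s ->
    \sum_(k <- sb) A k = 1 /\ \sum_(k <- sb) A k *: b k = P i.
  move=> i; have [si|si] := boolP (i \in s); last by exists (fun=> 0).
  by have [A ? ?] := hb i si; exists A.
(* Lifting x to (x, 1) turns affine combinations into linear ones. *)
pose lift (x : V) : (V * R^o)%type := (x, 1).
have algR1 (a : R) : (a%:A : R^o) = a by rewrite -[LHS]/(a * 1) mulr1.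
have fstE (F : nat -> (V * R^o)%type) r : (\sum_(k <- r) F k).1 = \sum_(k <- r) (F k).1.
  exact: big_morph.
have sndE (F : nat -> (V * R^o)%type) r : (\sum_(k <- r) F k).2 = \sum_(k <- r) (F k).2.
  exact: big_morph.
have [|c /hasP[i si ci] dep] := lin_dep_of_span (w := lift \o b) (u := lift \o P) (A := A) us lt_sb_s.
  move=> i /hA[A1 AP]; rewrite [RHS]surjective_pairing fstE sndE /=.
  rewrite /lift -AP; congr pair; rewrite -[in LHS]A1.
  by apply: eq_bigr => k _; rewrite algR1.
have := congr1 fst dep; have := congr1 snd dep; rewrite fstE sndE /=.
under eq_bigr do rewrite algR1.
by move=> c0 cP; move: ci; rewrite (hi c c0 cP i si) eqxx.
Qed.

End Affine.

(** * Convex combinations *)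

Lemma exists_argmin_seq (R : realDomainType) (f : nat -> R) (s : seq nat) :
  s != [::] -> exists2 j, j \in s & {in s, forall i, f j <= f i}.
Proof.
elim: s => [//|i s IH] _; have [->|/IH[j js jmin]] := eqVneq s [::].
  by exists i => [|k]; rewrite ?mem_head // inE => /eqP ->.
have [fij|fji] := leP (f i) (f j).
  exists i => [|k]; rewrite ?mem_head // inE => /predU1P[-> //|/jmin].
  exact: le_trans.
exists j => [|k]; first by rewrite inE js orbT.
by rewrite inE => /predU1P[->|/jmin //]; exact: ltW.
Qed.

Section Convex.
Variables (R : realFieldType) (V : lmodType R).
Implicit Types (b P : nat -> V) (s : seq nat) (v : V).

Definition convex_comb P s v := exists c : nat -> R,
  [/\ {in s, forall i, 0 <= c i}, \sum_(i <- s) c i = 1 & \sum_(i <- s) c i *: P i = v].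

Definition pos_convex_comb P s v := exists c : nat -> R,
  [/\ {in s, forall i, 0 < c i}, \sum_(i <- s) c i = 1 & \sum_(i <- s) c i *: P i = v].

Lemma convex_comb_affine P s v : convex_comb P s v -> affine_comb P s v.
Proof. by move=> [c [_ c1 cP]]; exists c. Qed.

Lemma convex_comb_perm P s s' v : perm_eq s s' -> convex_comb P s v -> convex_comb P s' v.
Proof.
move=> pss' [c [c0 c1 cP]]; exists c; rewrite -!(perm_big _ pss'); split => // i.
by rewrite -(perm_mem pss'); apply: c0.
Qed.

Lemma pos_convex_comb_perm P s s' v :
  perm_eq s s' -> pos_convex_comb P s v -> pos_convex_comb P s' v.
Proof.
move=> pss' [c [c0 c1 cP]]; exists c; rewrite -!(perm_big _ pss'); split => // i.
by rewrite -(perm_mem pss'); apply: c0.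
Qed.

Lemma convex_comb_sub P s s' v : uniq s -> uniq s' -> {subset s <= s'} ->
  convex_comb P s v -> convex_comb P s' v.
Proof.
move=> us us' ss' [c [c0 c1 cP]].
exists (fun i => if i \in s then c i else 0); split; first by move=> i _; case: ifP => // /c0.
  by rewrite sum_if_mem_sub.
under eq_bigr do rewrite (fun_if (fun a => a *: P _)) scale0r.
by rewrite sum_if_mem_sub.
Qed.

Lemma convex_comb_mem P s i : uniq s -> i \in s -> convex_comb P s (P i).
Proof.
move=> us si; exists (fun j => if j == i then 1 else 0); split; first by move=> j _; case: ifP.
  exact: sum_if_eq.
by under eq_bigr do rewrite (fun_if (fun a => a *: P _)) scale1r scale0r; exact: sum_if_eq.
Qed.

Lemma convex_comb_rem0 P s j (c : nat -> R) v : j \in s -> c j = 0 ->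
  {in s, forall i, 0 <= c i} -> \sum_(i <- s) c i = 1 ->
  \sum_(i <- s) c i *: P i = v -> convex_comb P (rem j s) v.
Proof.
move=> js cj c0; rewrite !(big_rem _ js) /= cj scale0r !add0r => c1 cP.
by exists c; split => // i /mem_rem; apply: c0.
Qed.

Lemma caratheodory_step b sb P s v : uniq s -> (size sb < size s)%N ->
  {in s, forall i, affine_comb b sb (P i)} -> convex_comb P s v ->
  exists2 j, j \in s & convex_comb P (rem j s) v.
Proof.
move=> us lt_sb_s hb [l [l0 l1 lP]].
have [c [c0 cP [k ks ck]]] : exists c : nat -> R, [/\ \sum_(i <- s) c i = 0,
    \sum_(i <- s) c i *: P i = 0 & exists2 k, k \in s & 0 < c k].
  have [c [c0 cP [k ks ck]]] := affine_depP us (affine_dep_of_span us lt_sb_s hb).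
  have [ck_pos|ck_neg] := ltP 0 (c k); first by exists c; split => //; exists k.
  exists (fun i => - c i); split; first by rewrite sumrN c0 oppr0.
    by under eq_bigr do rewrite scaleNr; rewrite sumrN cP oppr0.
  by exists k => //; rewrite oppr_gt0 lt_neqAle ck ck_neg.
pose pos := [seq i <- s | 0 < c i].
have [|j jpos jmin] := exists_argmin_seq (fun i => l i / c i) (s := pos).
  by apply/eqP => pos0; have := mem_filter (fun i => 0 < c i) k s; rewrite -/pos pos0 ks ck.
move: jpos; rewrite mem_filter => /andP[cj js].
pose th := l j / c j.
have th0 : 0 <= th by rewrite divr_ge0 ?l0 // ltW.
exists j => //; apply: (@convex_comb_rem0 _ _ _ (fun i => l i - th * c i)) => //.
- by rewrite /th divfK ?subrr // gt_eqF.
- move=> i si; rewrite subr_ge0; have [ci|ci] := ltP 0 (c i).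
    by rewrite -ler_pdivlMr // jmin // mem_filter ci si.
  exact: le_trans (mulr_ge0_le0 th0 ci) (l0 i si).
- by rewrite sumrB -mulr_sumr c0 mulr0 subr0.
- under eq_bigr do rewrite scalerBl -scalerA.
  by rewrite sumrB -scaler_sumr cP scaler0 subr0.
Qed.

End Convex.

(** * The infinite Ramsey theorem *)

Definition unbounded (P : nat -> Prop) := forall n, exists2 x, (n <= x)%N & P x.

(* k-subsets of Q are represented by their increasing enumerations. *)
Definition ksubset (k : nat) (Q : nat -> Prop) (u : seq nat) :=
  [/\ sorted ltn u, size u = k & {in u, forall x, Q x}].

Lemma ksubset_sub k (P Q : nat -> Prop) u :
  (forall x, Q x -> P x) -> ksubset k Q u -> ksubset k P u.
Proof. by move=> QP [su szu Qu]; split => // x /Qu /QP. Qed.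

Lemma unbounded_pigeonhole (f : nat -> bool) : exists b, unbounded (fun n => f n = b).
Proof.
have [ht|/existsNP[n0 hn0]] := pselect (unbounded (fun n => f n = true)); first by exists true.
exists false => n; exists (maxn n n0); first exact: leq_maxl.
apply/negbTE/negP => fn; apply: hn0; exists (maxn n n0) => //; exact: leq_maxr.
Qed.

Lemma unbounded_enum (Q : nat -> Prop) : unbounded Q ->
  exists2 e : nat -> nat, forall n, Q (e n) & {mono e : m n / (m <= n)%N}.
Proof.
move=> hQ; have /choice[nx hnx] : forall n, exists x, (n < x)%N /\ Q x.
  by move=> n; have [x ??] := hQ n.+1; exists x.
pose e := fix e n := if n is n'.+1 then nx (e n') else nx 0%N.
exists e => [[|n] /=|]; first by have [] := hnx 0%N.
  by have [] := hnx (e n).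
apply: leq_mono; apply: homo_ltn => [y x z|n]; [exact: ltn_trans | by have [] := hnx (e n)].
Qed.

Lemma ramsey_head k (c : seq nat -> bool) :
  (forall (c' : seq nat -> bool) P, unbounded P -> exists Q b,
     [/\ unbounded Q, forall x, Q x -> P x & forall u, ksubset k Q u -> c' u = b]) ->
  forall P, unbounded P -> exists a Q b, [/\ P a, forall x, Q x -> P x /\ (a < x)%N,
    unbounded Q & forall u, ksubset k Q u -> c (a :: u) = b].
Proof.
move=> IH P hP; have [a _ Pa] := hP 0%N.
have hP1 : unbounded (fun x => P x /\ (a < x)%N).
  move=> n; have [x nx Px] := hP (maxn n a.+1); exists x => //.
    exact: leq_trans (leq_maxl _ _) nx.
  by split => //; exact: leq_trans (leq_maxr _ _) nx.
have [Q [b [hQ QP1 hom]]] := IH (fun u => c (a :: u)) _ hP1.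
by exists a, Q, b.
Qed.

Lemma ramsey k (c : seq nat -> bool) (P : nat -> Prop) : unbounded P ->
  exists Q b, [/\ unbounded Q, forall x, Q x -> P x & forall u, ksubset k Q u -> c u = b].
Proof.
elim: k => [|k IH] in c P *.
  by move=> hP; exists P, (c [::]); split => // u [_ /size0nil ->].
move=> hP.
have /choice[g hg] : forall P0 : nat -> Prop, exists t : nat * (nat -> Prop) * bool,
    unbounded P0 -> [/\ P0 t.1.1, forall x, t.1.2 x -> P0 x /\ (t.1.1 < x)%N,
      unbounded t.1.2 & forall u, ksubset k t.1.2 u -> c (t.1.1 :: u) = t.2].
  move=> P0; have [/(ramsey_head c IH)[a [Q [b hQ]]]|] := pselect (unbounded P0).
    by exists (a, Q, b).
  by exists (0%N, P0, true).
pose Ps n := iter n (fun P0 => (g P0).1.2) P.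
pose a n := (g (Ps n)).1.1.
have hPs n : unbounded (Ps n) by elim: n => [|n IHn] //=; have [] := hg _ IHn.
have Ps_next n x : Ps n.+1 x -> Ps n x /\ (a n < x)%N by have [_ + _ _] := hg _ (hPs n); apply.
have Ps_mono i j : (i <= j)%N -> forall x, Ps j x -> Ps i x.
  by move=> /subnKC <-; elim: (j - i)%N => [|d IHd] x; rewrite ?addn0 // addnS => /Ps_next[/IHd].
have Psa n : Ps n (a n) by have [] := hg _ (hPs n).
have a_inc n : (a n < a n.+1)%N by have [] := Ps_next _ _ (Psa n.+1).
have a_mono : {mono a : m n / (m <= n)%N}.
  by apply: leq_mono; apply: homo_ltn => // y x z; exact: ltn_trans.
have a_ge n : (n <= a n)%N by elim: n => // n IHn; exact: leq_ltn_trans IHn (a_inc n).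
have [b hb] := unbounded_pigeonhole (fun n => (g (Ps n)).2).
exists (fun x => exists2 i, x = a i & (g (Ps i)).2 = b), b; split.
- by move=> n; have [i ni bi] := hb n; exists (a i); [exact: leq_trans ni (a_ge i) | exists i].
- by move=> _ [i -> _]; apply: (Ps_mono 0%N i) => //.
move=> u [su szu Qu]; case: u su szu Qu => [|x u] su; first by move/eqP.
move=> /= [szu] Qu; have [i xi bi] := Qu x (mem_head _ _).
have [_ _ _ hom] := hg _ (hPs i).
rewrite -bi xi; apply: hom; split => //; first exact: path_sorted su.
move=> y yu; have [j yj _] := Qu y (@mem_behead _ (x :: u) y yu).
have xy : (x < y)%N by move/(order_path_min ltn_trans)/allP: su; apply.
have ij : (i < j)%N by rewrite -(leqW_mono a_mono) -xi -yj.
by rewrite yj; apply: (Ps_mono i.+1 j ij); apply: Psa.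
Qed.

Lemma ramsey_multi k (cs : nat -> seq nat -> bool) n (P : nat -> Prop) : unbounded P ->
  exists Q, [/\ unbounded Q, forall x, Q x -> P x &
    forall t, (t < n)%N -> exists b, forall u, ksubset k Q u -> cs t u = b].
Proof.
move=> hP; elim: n => [|n [Q [hQ QP hom]]]; first by exists P.
have [Q' [b [hQ' Q'Q hom']]] := ramsey k (cs n) hQ.
exists Q'; split => // [x /Q'Q /QP //|t].
rewrite ltnS leq_eqVlt => /predU1P[->|tn]; first by exists b.
have [b' hb'] := hom t tn; exists b' => u /(ksubset_sub Q'Q); exact: hb'.
Qed.

Lemma unbounded_fresh (Q : nat -> Prop) k (L : seq nat) : unbounded Q ->
  exists E, [/\ size E = k, uniq E, {in E, forall x, Q x} & {in E, forall x, x \notin L}].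
Proof.
move=> hQ; elim: k => [|k [E [szE uE QE EL]]]; first by exists [::].
have [x xge Qx] := hQ (\max_(i <- L ++ E) i).+1.
have xLE : x \notin L ++ E.
  apply: contraTN xge => xLE; rewrite -ltnNge ltnS.
  exact: (@leq_bigmax_seq _ (L ++ E) xpredT id x xLE isT).
move: (xLE); rewrite mem_cat negb_or => /andP[xL xE].
exists (x :: E); split; [by rewrite /= szE | by rewrite /= xE | |].
  by move=> z; rewrite inE => /predU1P[->|/QE].
by move=> z; rewrite inE => /predU1P[->|/EL].
Qed.

(** * Convex position or monotone collinearity *)

Lemma rem_map_inj (T1 T2 : eqType) (f : T1 -> T2) x (s : seq T1) :
  injective f -> rem (f x) (map f s) = map f (rem x s).
Proof. by move=> f_inj; elim: s => //= z s ->; rewrite (inj_eq f_inj); case: eqP. Qed.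

Lemma nth_rem_iota N j t : (j < N)%N -> (t < N.-1)%N ->
  nth 0%N (rem j (iota 0 N)) t = if (t < j)%N then t else t.+1.
Proof.
move=> jN tN; have ij : index j (iota 0 N) = j.
  by rewrite -[X in index X _](add0n j) -(nth_iota 0 0 jN) index_uniq ?size_iota ?iota_uniq.
rewrite remE ij take_iota drop_iota nth_cat size_iota (minn_idPl (ltnW jN)).
by case: ltnP => tj; rewrite nth_iota //; lia.
Qed.

Lemma nth_rem_enum (e : nat -> nat) N j t : injective e -> (j < N)%N -> (t < N.-1)%N ->
  nth 0%N (rem (e j) (map e (iota 0 N))) t = e (if (t < j)%N then t else t.+1).
Proof.
move=> e_inj jN tN.
by rewrite rem_map_inj // (nth_map 0%N) ?nth_rem_iota // size_rem ?mem_iota // size_iota.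
Qed.

Lemma ksubset_rem_enum (Q : nat -> Prop) (e : nat -> nat) N j :
  (forall n, Q (e n)) -> {mono e : a b / (a <= b)%N} -> (j < N)%N ->
  ksubset N.-1 Q (rem (e j) (map e (iota 0 N))).
Proof.
move=> Qe e_mono jN; split; last by move=> x /mem_rem /mapP[i _ ->].
  apply: (subseq_sorted ltn_trans (rem_subseq _ _)).
  by apply: homo_sorted (iota_ltn_sorted 0 N) => a b; rewrite (leqW_mono e_mono).
by rewrite size_rem ?size_map ?size_iota // mem_map ?mem_iota //; exact: incn_inj.
Qed.

Section ConvexPosition.
Variables (R : realFieldType) (V : lmodType R) (y : nat -> V).

Definition convex_position (Q : nat -> Prop) := forall n G, Q n -> uniq G ->
  {in G, forall x, Q x} -> n \notin G -> ~ convex_comb y G (y n).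

Definition monotone_collinear (Q : nat -> Prop) := exists (v0 d : V) (t : nat -> R),
  [/\ d != 0, forall i j, Q i -> Q j -> (i < j)%N -> t i < t j &
      forall n, Q n -> y n = v0 + t n *: d].

Definition convex_or_collinear (P : nat -> Prop) := exists Q,
  [/\ unbounded Q, forall x, Q x -> P x & convex_position Q \/ monotone_collinear Q].

Definition hull_at t (u : seq nat) := convex_comb y (rem (nth 0%N u t) u) (y (nth 0%N u t)).

Definition msubsets_indep m (Q : nat -> Prop) := forall L, uniq L -> size L = m ->
  {in L, forall x, Q x} -> affine_indep y L.

Lemma pos_convex_comb_of_indep m Q v L : msubsets_indep m Q -> Q v ->
  uniq L -> size L = m -> {in L, forall x, Q x} -> v \notin L ->
  convex_comb y L (y v) -> pos_convex_comb y L (y v).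
Proof.
move=> hind Qv uL szL QL vL [c [c0 c1 cP]]; exists c; split => // i iL.
rewrite lt_def c0 // andbT; apply/eqP => ci.
have vr : v \notin rem i L by apply: contra vL; apply: mem_rem.
apply: (affine_indep_consN (convex_comb_affine (convex_comb_rem0 iL ci c0 c1 cP)) vr).
apply: hind => [|/=|x]; first by rewrite /= vr rem_uniq.
  by rewrite size_rem // -szL; case: (L) iL.
by rewrite inE => /predU1P[->//|/mem_rem/QL].
Qed.

Lemma exchange_coord (p q j : nat) (B : seq nat) (mu nu g : nat -> R) :
  j \in B -> affine_indep y B ->
  \sum_(i <- B) mu i = 1 -> \sum_(i <- B) mu i *: y i = y q ->
  \sum_(i <- B) nu i = 1 -> \sum_(i <- B) nu i *: y i = y p ->
  \sum_(i <- q :: rem j B) g i = 1 -> \sum_(i <- q :: rem j B) g i *: y i = y p ->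
  {in B, forall i, nu i = g q * mu i + (if i == j then 0 else g i)}.
Proof.
move=> jB iB mu1 muy nu1 nuy; rewrite !big_cons => g1 gy.
have [uB _] := iB.
have drop_j (T : nmodType) (F : nat -> T) :
    \sum_(i <- B) (if i == j then 0 else F i) = \sum_(i <- rem j B) F i.
  rewrite (big_rem _ jB) /= eqxx add0r; apply: eq_big_seq => i.
  by rewrite mem_rem_uniq // inE => /andP[/negbTE ->].
apply: (affine_coord_unique iB); first by rewrite big_split /= -mulr_sumr mu1 mulr1 drop_j g1 nu1.
under [RHS]eq_bigr do rewrite scalerDl -scalerA (fun_if (fun a => a *: y _)) scale0r.
by rewrite big_split /= -scaler_sumr muy drop_j gy nuy.
Qed.

Lemma pos_exchange_contra (p q j1 j2 : nat) (B : seq nat) :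
  j1 \in B -> j2 \in B -> j1 != j2 -> affine_indep y B ->
  pos_convex_comb y B (y q) -> pos_convex_comb y B (y p) ->
  pos_convex_comb y (q :: rem j1 B) (y p) -> pos_convex_comb y (q :: rem j2 B) (y p) ->
  False.
Proof.
move=> j1B j2B j12 iB [mu [mu0 mu1 muy]] [nu [_ nu1 nuy]] [g [g0 g1 gy]] [h [h0 h1 hy]].
have [uB _] := iB.
have in_rem j k : k \in B -> k != j -> k \in q :: rem j B.
  by move=> kB kj; rewrite inE mem_rem_uniq // inE kj kB orbT.
have eg := exchange_coord j1B iB mu1 muy nu1 nuy g1 gy.
have eh := exchange_coord j2B iB mu1 muy nu1 nuy h1 hy.
have := eg j1 j1B; have := eg j2 j2B; have := eh j1 j1B; have := eh j2 j2B.
rewrite !eqxx !addr0 (negbTE j12) eq_sym (negbTE j12).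
have j21 : j2 != j1 by rewrite eq_sym.
have gj2 := g0 j2 (in_rem _ _ j2B j21).
have hj1 := h0 j1 (in_rem _ _ j1B j12).
have mj1 := mu0 _ j1B; have mj2 := mu0 _ j2B.
(* The coordinates of p at j1 and j2 force h q - g q to be both > 0 and < 0. *)
move=> nu2 nu1' nu2' nu1''.
have : 0 < (h q - g q) * mu j2 by rewrite mulrBl -nu2 nu2' addrAC subrr add0r.
have : 0 < (g q - h q) * mu j1 by rewrite mulrBl -nu1'' nu1' addrAC subrr add0r.
rewrite !pmulr_lgt0 //; lra.
Qed.

Lemma hull_exchange_contra m Q (Z : seq nat) p q j1 j2 : msubsets_indep m Q ->
  uniq Z -> size Z = m.+2 -> {in Z, forall x, Q x} ->
  p \in Z -> q \in Z -> j1 \in Z -> j2 \in Z ->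
  p != q -> j1 != j2 -> j1 != p -> j1 != q -> j2 != p -> j2 != q ->
  convex_comb y (rem p (rem q Z)) (y p) -> convex_comb y (rem q (rem p Z)) (y q) ->
  convex_comb y (rem p (rem j1 Z)) (y p) -> convex_comb y (rem p (rem j2 Z)) (y p) ->
  False.
Proof.
move=> hind uZ szZ QZ pZ qZ j1Z j2Z pq j12 j1p j1q j2p j2q hp hq h1 h2.
have mem2 a c x : x \in rem a (rem c Z) = [&& x != a, x != c & x \in Z].
  by rewrite mem_rem_uniq ?rem_uniq // inE mem_rem_uniq // inE.
have u2 a c : uniq (rem a (rem c Z)) by rewrite !rem_uniq.
have sz2 a c : a \in Z -> c \in Z -> a != c -> size (rem a (rem c Z)) = m.
  move=> aZ cZ ac; have acZ : a \in rem c Z by rewrite mem_rem_uniq // inE ac aZ.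
  by rewrite size_rem // size_rem // szZ.
have Q2 a c : {in rem a (rem c Z), forall x, Q x} by move=> x /mem_rem/mem_rem/QZ.
have pos a c : a \in Z -> c \in Z -> a != c -> convex_comb y (rem a (rem c Z)) (y a) ->
    pos_convex_comb y (rem a (rem c Z)) (y a).
  move=> aZ cZ ac; apply: (pos_convex_comb_of_indep hind (QZ a aZ) (u2 _ _) (sz2 _ _ aZ cZ ac)).
    exact: Q2.
  by rewrite mem2 eqxx.
set B := rem p (rem q Z).
have perm_B a : a \in Z -> a != p -> a != q -> perm_eq (rem p (rem a Z)) (q :: rem a B).
  move=> aZ ap aq; apply: uniq_perm => // [|x].
    rewrite /= (rem_uniq _ (u2 _ _)) andbT; apply: contra (@mem_rem _ a B q) _.
    by rewrite mem2 eqxx andbF.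
  rewrite mem2 inE mem_rem_uniq ?u2 // inE /B mem2.
  case: (eqVneq x q) => [->|_] /=; first by rewrite eq_sym pq eq_sym aq qZ.
  by case: (x != p); case: (x != a).
apply: (@pos_exchange_contra p q j1 j2 B).
- by rewrite mem2 j1p j1q j1Z.
- by rewrite mem2 j2p j2q j2Z.
- exact: j12.
- exact: hind (u2 _ _) (sz2 _ _ pZ qZ pq) (Q2 _ _).
- apply: (pos_convex_comb_perm (s := rem q (rem p Z))).
    by apply: uniq_perm; rewrite ?u2 // => x; rewrite !mem2; case: (x != p); case: (x != q).
  by apply: pos => //; rewrite eq_sym.
- exact: pos.
- by apply: pos_convex_comb_perm (perm_B _ j1Z j1p j1q) (pos _ _ _ _ _ h1); rewrite // eq_sym.
- by apply: pos_convex_comb_perm (perm_B _ j2Z j2p j2q) (pos _ _ _ _ _ h2); rewrite // eq_sym.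
Qed.

Lemma not_always_in_hull m Q t : (3 <= m)%N -> unbounded Q -> msubsets_indep m Q ->
  (t < m.+1)%N ->
  ~ (forall u, ksubset m.+1 Q u -> hull_at t u).
Proof.
move=> m3 hQ hind tm homT.
have [e Qe e_mono] := unbounded_enum hQ.
have e_inj := incn_inj e_mono.
set Z := map e (iota 0 m.+2).
have uZ : uniq Z by rewrite map_inj_uniq // iota_uniq.
have szZ : size Z = m.+2 by rewrite size_map size_iota.
have QZ : {in Z, forall x, Q x} by move=> _ /mapP[i _ ->].
have eZ i : (i < m.+2)%N -> e i \in Z by move=> im; rewrite mem_map // mem_iota.
have hull j : (j < m.+2)%N -> hull_at t (rem (e j) Z).
  by move=> jm; apply/homT/ksubset_rem_enum.
have hull_lt j : (t < j)%N -> (j < m.+2)%N -> convex_comb y (rem (e t) (rem (e j) Z)) (y (e t)).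
  by move=> tj jm; have := hull j jm; rewrite /hull_at nth_rem_enum // tj.
have hull_ge j : (j <= t)%N -> (j < m.+2)%N ->
    convex_comb y (rem (e t.+1) (rem (e j) Z)) (y (e t.+1)).
  by move=> jt jm; have := hull j jm; rewrite /hull_at nth_rem_enum // ltnNge jt.
have e_neq a c : a != c -> e a != e c by rewrite (inj_eq e_inj).
have [t_small|t_large] := leqP t.+2 m.
  apply: (@hull_exchange_contra m Q Z (e t) (e t.+1) (e t.+2) (e t.+3)) => //;
    try (apply: eZ; lia); try (apply: e_neq; lia).
  - by apply: hull_lt; lia.
  - by apply: hull_ge; lia.
  - by apply: hull_lt; lia.
  - by apply: hull_lt; lia.
apply: (@hull_exchange_contra m Q Z (e t.+1) (e t) (e 0) (e 1)) => //;
  try (apply: eZ; lia); try (apply: e_neq; lia).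
- by apply: hull_ge; lia.
- by apply: hull_lt; lia.
- by apply: hull_ge; lia.
- by apply: hull_ge; lia.
Qed.

Lemma not_in_small_hull m Q n G : unbounded Q ->
  (forall t, (t < m.+1)%N -> forall u, ksubset m.+1 Q u -> ~ hull_at t u) ->
  Q n -> uniq G -> (size G <= m)%N -> {in G, forall x, Q x} -> n \notin G ->
  ~ convex_comb y G (y n).
Proof.
move=> hQ hom Qn uG szG QG nG nGhull.
have [E [szE uE QE EnG]] := unbounded_fresh (m - size G) (n :: G) hQ.
have uGE : uniq (G ++ E).
  rewrite cat_uniq uG uE andbT; apply/hasPn => x /EnG.
  by rewrite inE negb_or => /andP[].
have nGE : n \notin G ++ E.
  by rewrite mem_cat negb_or nG; apply: contraL (mem_head n G) => /EnG.
set u := sort leq (n :: G ++ E).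
have uu : uniq u by rewrite sort_uniq /= nGE.
have nu : n \in u by rewrite mem_sort mem_head.
have szu : size u = m.+1 by rewrite size_sort /= size_cat szE subnKC.
apply: (hom (index n u) _ u); rewrite /hull_at ?nth_index //.
- by rewrite -szu index_mem.
- split => //; first by rewrite ltn_sorted_uniq_leq uu sort_sorted //; exact: leq_total.
  by move=> x; rewrite mem_sort inE mem_cat => /predU1P[->|/orP[/QG|/QE]].
apply: (convex_comb_perm (s := G ++ E)).
  apply: uniq_perm; rewrite ?rem_uniq // => x.
  rewrite mem_rem_uniq // inE mem_sort inE.
  by case: (eqVneq x n) => [->|]; rewrite ?(negbTE nGE).
by apply: (convex_comb_sub uG uGE _ nGhull) => x xG; rewrite mem_cat xG.
Qed.

Lemma convex_position_of_not_in_hull m b sb Q : unbounded Q -> size sb = m ->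
  (forall n, Q n -> affine_comb b sb (y n)) ->
  (forall t, (t < m.+1)%N -> forall u, ksubset m.+1 Q u -> ~ hull_at t u) ->
  convex_position Q.
Proof.
move=> hQ szb hb hom n G Qn; have [k szG] : exists k, (size G <= k)%N by exists (size G).
elim: k G szG => [|k IH] G szG uG QG nG hull.
  exact: not_in_small_hull hQ hom Qn uG (leq_trans szG _) QG nG hull.
have [small|big] := leqP (size G) m; first exact: not_in_small_hull hQ hom Qn uG small QG nG hull.
have [|j jG hullj] := caratheodory_step uG _ (fun i iG => hb i (QG i iG)) hull; first by rewrite szb.
apply: (IH (rem j G)) hullj; first by rewrite size_rem // -ltnS prednK // (leq_ltn_trans _ big).
- exact: rem_uniq.
- by move=> x /mem_rem /QG.
- by apply: contra nG; apply: mem_rem.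
Qed.

Lemma convex_or_collinear_sub (P Q : nat -> Prop) :
  (forall x, Q x -> P x) -> convex_or_collinear Q -> convex_or_collinear P.
Proof. by move=> QP [Q' [hQ' Q'Q h]]; exists Q'; split => // x /Q'Q /QP. Qed.

Lemma convex_position_of_indep Q :
  (forall L, uniq L -> {in L, forall x, Q x} -> affine_indep y L) -> convex_position Q.
Proof.
move=> hind n G Qn uG QG nG /convex_comb_affine hull.
apply: (affine_indep_consN hull nG); apply: hind; first by rewrite /= nG.
by move=> x; rewrite inE => /predU1P[->|/QG].
Qed.

Lemma indep_size_lt m Q L : (forall u, ksubset m Q u -> ~ affine_indep y u) ->
  affine_indep y L -> {in L, forall x, Q x} -> (size L < m)%N.
Proof.
move=> dep iL QL; rewrite ltnNge; apply/negP => mL.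
have [uL _] := iL.
have su : sorted ltn (sort leq L).
  by rewrite ltn_sorted_uniq_leq sort_uniq uL sort_sorted //; exact: leq_total.
apply: (dep (take m (sort leq L))).
  split; [exact: take_sorted | by rewrite size_takel // size_sort |].
  by move=> x /mem_take; rewrite mem_sort => /QL.
apply: (affine_indep_sub (s := sort leq L)); last exact: mem_take.
  by apply: affine_indep_perm iL; rewrite perm_sym perm_sort.
by apply: take_uniq; rewrite sort_uniq.
Qed.

Lemma affine_basis_in m Q :
  (forall L, affine_indep y L -> {in L, forall x, Q x} -> (size L < m)%N) ->
  exists s, [/\ affine_indep y s, {in s, forall x, Q x} & forall n, Q n -> affine_comb y s (y n)].
Proof.
move=> bound; suff grow : forall r s, (m - size s <= r)%N -> affine_indep y s ->
    {in s, forall x, Q x} -> exists s', [/\ affine_indep y s', {in s', forall x, Q x} &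
      forall n, Q n -> affine_comb y s' (y n)].
  by apply: (grow m [::]); rewrite ?leq_subr //; exact: affine_indep_nil.
elim=> [|r IH] s ms si Qs; first by have := bound s si Qs; lia.
have [spans|/existsNP[n /not_implyP[Qn nspan]]] :=
  pselect (forall n, Q n -> affine_comb y s (y n)); first by exists s.
apply: (IH (n :: s)); first by have := bound s si Qs; move: ms => /=; lia.
  exact: affine_indep_cons.
by move=> x; rewrite inE => /predU1P[->|/Qs].
Qed.

Lemma convex_or_collinear_of_msubsets_indep m b sb Q : (3 <= m)%N -> unbounded Q ->
  size sb = m -> (forall n, Q n -> affine_comb b sb (y n)) -> msubsets_indep m Q ->
  convex_or_collinear Q.
Proof.
move=> m3 hQ szb hb hind.
pose cs t u := `[< hull_at t u >].
have [Q2 [hQ2 Q2Q hom]] := ramsey_multi m.+1 cs m.+1 hQ.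
have hind2 : msubsets_indep m Q2 by move=> L uL szL QL; apply: hind => // x /QL /Q2Q.
exists Q2; split => //; left.
apply: (convex_position_of_not_in_hull hQ2 szb (fun n Qn => hb n (Q2Q n Qn))).
move=> t tm u Qu hull; have [[] hcs] := hom t tm.
  by apply: (not_always_in_hull m3 hQ2 hind2 tm) => v Qv; apply/asboolP/hcs.
by move/asboolP: hull; rewrite -/(cs t u) hcs.
Qed.

Hypothesis y_inj : injective y.

Lemma affine_span_le1_contra b sb P : unbounded P -> (size sb <= 1)%N ->
  ~ (forall n, P n -> affine_comb b sb (y n)).
Proof.
move=> hP; case: sb => [|k [|//]] _ hb.
  by have [n _ /hb[c]] := hP 0%N; rewrite big_nil => /eqP; rewrite eq_sym oner_eq0.
have yE n : P n -> y n = b k by move=> /hb[c]; rewrite !big_seq1 => -> <-; rewrite scale1r.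
have [n1 _ P1] := hP 0%N; have [n2 n12 P2] := hP n1.+1.
by move: n12; rewrite (y_inj (etrans (yE _ P1) (esym (yE _ P2)))) ltnn.
Qed.

Lemma convex_or_collinear_of_line P (v0 d : V) (T : nat -> R) : unbounded P -> d != 0 ->
  (forall n, P n -> y n = v0 + T n *: d) -> convex_or_collinear P.
Proof.
move=> hP d0 hT.
have T_inj i j : P i -> P j -> T i = T j -> i = j.
  by move=> Pi Pj Tij; apply: y_inj; rewrite !hT // Tij.
have [Q [c [hQ QP hom]]] := ramsey 2 (fun u => T (nth 0%N u 0) < T (nth 0%N u 1)) hP.
have homQ i j : Q i -> Q j -> (i < j)%N -> (T i < T j) = c.
  move=> Qi Qj ij; apply: (hom [:: i; j]); split => //=; first by rewrite ij.
  by move=> x; rewrite !inE => /orP[]/eqP->.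
exists Q; split => //; right; case: c {hom} homQ => homQ.
  by exists v0, d, T; split => [//|i j Qi Qj ij|n /QP/hT //]; rewrite homQ.
exists v0, (- d), (fun n => - T n); split => [|i j Qi Qj ij|n /QP/hT ->].
- by rewrite oppr_eq0.
- rewrite ltrN2 lt_def leNgt homQ // andbT.
  by apply: contraTneq ij => /(T_inj _ _ (QP _ Qi) (QP _ Qj)) ->; rewrite ltnn.
- by rewrite scaleNr scalerN opprK.
Qed.

Lemma convex_or_collinear_span2 b sb P : unbounded P -> affine_indep b sb -> size sb = 2 ->
  (forall n, P n -> affine_comb b sb (y n)) -> convex_or_collinear P.
Proof.
case: sb => [|k0 [|k1 []]] // hP ib _ hb.
have k01 : k0 != k1 by case: ib => /andP[]; rewrite inE.
have /choice[T hT] : forall n, exists t : R, P n -> y n = b k0 + t *: (b k1 - b k0).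
  move=> n; have [/hb[c c1 cy]|] := pselect (P n); last by exists 0.
  exists (c k1) => _; move: c1 cy; rewrite !big_cons !big_nil !addr0 => c1 <-.
  rewrite (_ : c k0 = 1 - c k1) ?scalerBl ?scale1r ?scalerBr; last by rewrite -c1 addrK.
  by rewrite -addrA [- _ + _]addrC.
apply: (convex_or_collinear_of_line hP _ (fun n Pn => hT n Pn)).
rewrite subr_eq0; apply: contraPneq ib => b10.
apply: affine_indep_consN; last by rewrite inE.
by rewrite -b10; apply: affine_comb_mem; rewrite ?mem_head.
Qed.

Lemma convex_or_collinear_of_span m b sb P : unbounded P -> affine_indep b sb ->
  size sb = m -> (forall n, P n -> affine_comb b sb (y n)) -> convex_or_collinear P.
Proof.
elim/ltn_ind: m => m IH in b sb P *; move=> hP ib szb hb.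
have [m_le1|m_gt1] := leqP m 1; first by case: (affine_span_le1_contra hP _ hb); rewrite szb.
have [m_le2|m3] := leqP m 2.
  by apply: (convex_or_collinear_span2 hP ib _ hb); rewrite szb; lia.
have [Q [[] [hQ QP hom]]] := ramsey m (fun u => `[< affine_indep y u >]) hP.
  apply: (convex_or_collinear_sub QP).
  apply: (convex_or_collinear_of_msubsets_indep m3 hQ szb (fun n Qn => hb n (QP n Qn))).
  move=> L uL szL QL; apply: (affine_indep_perm (permEl (perm_sort leq L))); apply/asboolP/hom.
  split; [|by rewrite size_sort | by move=> x; rewrite mem_sort => /QL].
  by rewrite ltn_sorted_uniq_leq sort_uniq uL sort_sorted //; exact: leq_total.
have bound L : affine_indep y L -> {in L, forall x, Q x} -> (size L < m)%N.
  by apply: indep_size_lt => u /hom /asboolP.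
have [s [si Qs span]] := affine_basis_in bound.
exact: (convex_or_collinear_sub QP (IH _ (bound s si Qs) y s Q hQ si erefl span)).
Qed.

Lemma indep_unbounded_of_not_span :
  (forall s, uniq s -> exists n, ~ affine_comb y s (y n)) ->
  exists2 Q, unbounded Q & forall L, uniq L -> {in L, forall x, Q x} -> affine_indep y L.
Proof.
move=> nspan.
have /choice[f hf] : forall s : seq nat, exists n, affine_indep y s -> ~ affine_comb y s (y n).
  move=> s; have [[us _]|] := pselect (affine_indep y s); last by exists 0%N.
  by have [n hn] := nspan s us; exists n.
pose Ls := fix Ls k := if k is k'.+1 then f (Ls k') :: Ls k' else [::].
have Ls_indep k : affine_indep y (Ls k).
  by elim: k => [|k IHk] /=; [exact: affine_indep_nil | exact: affine_indep_cons (hf _ IHk)].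
have Ls_mono k k' : (k <= k')%N -> {subset Ls k <= Ls k'}.
  by move=> /subnK <-; elim: (k' - k)%N => //= d IHd z /IHd; rewrite inE => ->; rewrite orbT.
have Ls_size k : size (Ls k) = k by elim: k => //= k ->.
exists (fun z => exists k, z \in Ls k).
  move=> n; have [uL _] := Ls_indep n.+1.
  have /hasP[x xL nx] : has (leq n) (Ls n.+1).
    apply/contraT => /hasPn small; have := uniq_leq_size (s2 := iota 0 n) uL.
    by rewrite Ls_size size_iota ltnn; apply=> x /small; rewrite mem_iota -ltnNge.
  by exists x => //; exists n.+1.
move=> L uL QL; have [K LK] : exists K, {subset L <= Ls K}.
  elim: L {uL} QL => [|z L IHL] QL; first by exists 0%N.
  have [k zk] := QL z (mem_head _ _).
  have [K LK] := IHL (fun x xL => QL x (@mem_behead _ (z :: L) x xL)).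
  exists (maxn k K) => x; rewrite inE => /predU1P[->|/LK].
    exact: Ls_mono (leq_maxl _ _) _ zk.
  exact: Ls_mono (leq_maxr _ _) _.
exact: affine_indep_sub (Ls_indep K) uL LK.
Qed.

Lemma convex_or_collinear_all : convex_or_collinear (fun _ => True).
Proof.
have [nspan|/existsNP[s /not_implyP[us /forallNP nspan]]] :=
  pselect (forall s, uniq s -> exists n, ~ affine_comb y s (y n)).
  have [Q hQ hind] := indep_unbounded_of_not_span nspan.
  by exists Q; split => //; left; exact: convex_position_of_indep.
have span n : affine_comb y s (y n) by apply: contrapT; exact: nspan.
have bound L : affine_indep y L -> {in L, forall x, True} -> (size L < (size s).+1)%N.
  move=> iL _; rewrite ltnS leqNgt; apply/negP => lt_s_L; have [uL _] := iL.
  exact: affine_dep_of_span uL lt_s_L (fun i _ => span i) iL.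
have [s' [s'i _ s'span]] := affine_basis_in bound.
by apply: (convex_or_collinear_of_span _ s'i erefl) => [n|n _]; [exists n | exact: s'span].
Qed.

End ConvexPosition.

(** * Convex hulls and the embeddings *)

Local Open Scope classical_set_scope.

Section ConvHull.
Variables (R : realType) (V : lmodType R).
Implicit Types (A B : set V).

Lemma subset_conv_hull A : A `<=` conv_hull A.
Proof. by move=> x Ax C _; apply. Qed.

Lemma conv_hull_min A (C : set (convex_lmodType V)) :
  convex_set C -> A `<=` C -> conv_hull A `<=` C.
Proof. by move=> cC AC x; apply. Qed.

Lemma conv_hull_convex A : convex_set (conv_hull A : set (convex_lmodType V)).
Proof.
move=> a c l /set_mem ha /set_mem hc; apply/mem_set => C cC AC.
exact: set_mem (cC a c l (mem_set (ha C cC AC)) (mem_set (hc C cC AC))).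
Qed.

Lemma conv_hull_mono A B : A `<=` B -> conv_hull A `<=` conv_hull B.
Proof.
move=> AB; apply: conv_hull_min; first exact: conv_hull_convex.
by move=> x /AB; apply: subset_conv_hull.
Qed.

Lemma convex_set_segment (C : set (convex_lmodType V)) (a c : V) (s : R) :
  convex_set C -> C a -> C c -> 0 <= s <= 1 -> C (s *: a + (1 - s) *: c).
Proof.
move=> cC Ca Cc /andP[s0 s1].
exact: set_mem (cC a c (Itv01 s0 s1) (mem_set Ca) (mem_set Cc)).
Qed.

Lemma convex_comb_convex (P : nat -> V) (L : seq nat) :
  convex_set ([set v | convex_comb P L v] : set (convex_lmodType V)).
Proof.
move=> a c l /set_mem[ca [ca0 ca1 caP]] /set_mem[cc [cc0 cc1 ccP]].
have l0 : 0 <= l%:num := ge0 l.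
have l1 : l%:num <= 1 := le1 l.
apply/mem_set; exists (fun i => l%:num * ca i + (1 - l%:num) * cc i); split.
- by move=> i iL; rewrite addr_ge0 // mulr_ge0 ?ca0 ?cc0 ?subr_ge0.
- by rewrite big_split /= -!mulr_sumr ca1 cc1 !mulr1 addrC subrK.
- under eq_bigr do rewrite scalerDl -!scalerA.
  by rewrite big_split /= -!scaler_sumr caP ccP.
Qed.

Lemma conv_hull_convex_comb (P : nat -> V) (L : seq nat) :
  conv_hull [set P i | i in [set` L]] `<=` [set v | convex_comb P (undup L) v].
Proof.
apply: conv_hull_min; first exact: convex_comb_convex.
by move=> _ [i /= iL <-]; apply: convex_comb_mem; rewrite ?undup_uniq ?mem_undup.
Qed.

Lemma conv_hull_join (X A B : set V) : A `<=` X -> B `<=` X ->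
  conv_hull (A `|` B) = conv_hull ((conv_hull A `&` X) `|` (conv_hull B `&` X)).
Proof.
move=> AX BX; apply/seteqP; split.
  apply: conv_hull_mono => v [Av|Bv]; [left|right]; split; try exact: subset_conv_hull.
    exact: AX.
  exact: BX.
apply: conv_hull_min; first exact: conv_hull_convex.
by move=> v [[hv _]|[hv _]]; apply: conv_hull_mono hv => w ?; [left|right].
Qed.

End ConvHull.

Section HullTrace.
Variables (R : realType) (V : lmodType R) (X : set V) (x : nat -> V).
Hypothesis xX : forall k, X (x k).

Definition hull_trace (I : set nat) : set V := conv_hull [set x k | k in I] `&` X.

Lemma join_embedding_hull_trace (D : set nat -> Prop) (jD : set nat -> set nat -> set nat) :
  (forall I, D I -> finite_set I) -> (forall I k, D I -> hull_trace I (x k) -> I k) ->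
  (forall I J, D I -> D J ->
     conv_hull [set x k | k in jD I J] = conv_hull [set x k | k in I `|` J]) ->
  join_embedding X D jD hull_trace.
Proof.
move=> Dfin Dmem Djoin; split.
- move=> I DI; exists [set x k | k in I]; split => //; first exact/finite_image/Dfin.
  by move=> _ [k _ <-].
- move=> I J DI DJ IJ; apply/seteqP; split => k Ik; apply: Dmem => //.
    by rewrite -IJ; split; [apply: subset_conv_hull; exists k | exact: xX].
  by rewrite IJ; split; [apply: subset_conv_hull; exists k | exact: xX].
- move=> I J DI DJ; rewrite /hull_trace /Co_join Djoin // image_setU.
  by rewrite (conv_hull_join (X := X)) // => _ [k _ <-].
Qed.

Lemma convex_position_embedding : convex_position x (fun _ => True) ->
  exists f, join_embedding X nat_fin_subset setU f.
Proof.
move=> cp; exists hull_trace; apply: join_embedding_hull_trace => // F k.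
move=> /finite_seqP[s ->] [/conv_hull_convex_comb hull _] /=.
apply: contrapT; rewrite -mem_undup => /negP ks.
exact: cp k (undup s) I (undup_uniq s) (fun _ _ => I) ks hull.
Qed.

Section Line.
Variables (v0 d : V) (tau : nat -> R).
Hypotheses (d0 : d != 0) (tau_inc : {homo tau : i j / (i < j)%N >-> i < j})
  (x_line : forall k, x k = v0 + tau k *: d).

Lemma line_comb (s a b : R) :
  s *: (v0 + a *: d) + (1 - s) *: (v0 + b *: d) = v0 + (s * a + (1 - s) * b) *: d.
Proof. by rewrite !scalerDr !scalerA addrACA -!scalerDl [s + _]addrC subrK scale1r. Qed.

Lemma hull_trace_interval a b k :
  hull_trace [set i | (a <= i <= b)%N] (x k) -> (a <= k <= b)%N.
Proof.
move=> [hk _].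
have tau_le i j : (i <= j)%N -> tau i <= tau j.
  by rewrite leq_eqVlt => /predU1P[->//|/tau_inc/ltW].
pose C := [set v : V | exists2 s, tau a <= s <= tau b & v = v0 + s *: d].
have [s /andP[sa sb] xk] : C (x k).
  apply: hk => [u w l /set_mem[s1 /andP[s1a s1b] ->] /set_mem[s2 /andP[s2a s2b] ->] |
                _ [i /andP[ai ib] <-]]; last first.
    by exists (tau i); rewrite ?x_line // !tau_le.
  apply/mem_set; exists (l%:num * s1 + (1 - l%:num) * s2); last exact: line_comb.
  have l0 : 0 <= l%:num := ge0 l; have l1 : 0 <= 1 - l%:num by rewrite subr_ge0 le1.
  have lt (t : R) : t = l%:num * t + (1 - l%:num) * t by rewrite -mulrDl addrC subrK mul1r.
  rewrite (lt (tau a)) (lt (tau b)); apply/andP; split.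
    by apply: lerD; apply: ler_wpM2l.
  by apply: lerD; apply: ler_wpM2l.
have {xk}sk : tau k = s.
  move: xk; rewrite x_line => /addrI/eqP.
  by rewrite -subr_eq0 -scalerBl scaler_eq0 (negbTE d0) orbF subr_eq0 => /eqP.
by apply/andP; split; rewrite leqNgt; apply/negP => /tau_inc; lra.
Qed.

Lemma segment_between i k j : (i <= k <= j)%N ->
  exists2 s : R, 0 <= s <= 1 & x k = s *: x i + (1 - s) *: x j.
Proof.
move=> /andP[ik kj]; have [<-|ki] := eqVneq i k.
  by exists 1; rewrite ?ler01 ?lexx // subrr scale0r addr0 scale1r.
have tik : tau i < tau k by apply: tau_inc; rewrite ltn_neqAle ki ik.
have tkj : tau k <= tau j by move: kj; rewrite leq_eqVlt => /predU1P[->//|/tau_inc/ltW].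
exists ((tau j - tau k) / (tau j - tau i)).
  by rewrite divr_ge0 ?subr_ge0 ?ler_pdivrMr ?subr_gt0 ?mul1r //=; lra.
rewrite !x_line line_comb; congr (_ + _ *: d); field.
by rewrite subr_eq0 gt_eqF //; lra.
Qed.

Lemma conv_hull_interval_join I J :
  conv_hull [set x k | k in interval_join I J] = conv_hull [set x k | k in I `|` J].
Proof.
apply/seteqP; split; last first.
  apply: conv_hull_mono; apply: image_subset => k IJk.
  by exists k, k; split => //; rewrite leqnn.
apply: conv_hull_min; first exact: conv_hull_convex.
move=> _ [k [i [j [IJi IJj /segment_between[s s01 ->]]]] <-].
apply: convex_set_segment s01; first exact: conv_hull_convex.
  by apply: subset_conv_hull; exists i.
by apply: subset_conv_hull; exists j.
Qed.

Lemma monotone_line_embedding : exists f, join_embedding X nat_fin_interval interval_join f.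
Proof.
have set0E : set0 = [set i | (1 <= i <= 0)%N] by apply/seteqP; split => i //= /andP[]; lia.
exists hull_trace; apply: join_embedding_hull_trace => [I [->|[a [b ->]]]|I k|I J _ _].
- exact: finite_set0.
- by apply: sub_finite_set (finite_II b.+1) => i /andP[].
- case=> [->|[a [b ->]]] /=; last exact: hull_trace_interval.
  by rewrite set0E => /hull_trace_interval; lia.
- exact: conv_hull_interval_join.
Qed.

End Line.

End HullTrace.

Lemma infinite_inj_seq (T : choiceType) (X : set T) : infinite_set X ->
  exists2 y : nat -> T, injective y & forall n, X (y n).
Proof.
move=> Xinf; have /choice[f hf] : forall s : seq T, exists v, X v /\ v \notin s.
  move=> s; apply: contrapT => nv; apply: Xinf; apply: sub_finite_set (finite_seq s) => v Xv.
  by apply: contrapT => /negP vs; apply: nv; exists v.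
pose L := fix L n := if n is n'.+1 then f (L n') :: L n' else [::].
have memL i j : (i < j)%N -> f (L i) \in L j.
  move=> /subnK <-; elim: (j - i.+1)%N => [|d IHd] /=; first exact: mem_head.
  by rewrite inE IHd orbT.
exists (fun n => f (L n)) => [i j fij|n]; last by case: (hf (L n)).
have [ij|ji|//] := ltngtP i j.
  by have := memL _ _ ij; rewrite fij; case: (hf (L j)) => _ /negbTE ->.
by have := memL _ _ ji; rewrite -fij; case: (hf (L i)) => _ /negbTE ->.
Qed.

Lemma convex_position_comp (R : realFieldType) (V : lmodType R) (y : nat -> V) Q
    (e : nat -> nat) :
  injective e -> (forall n, Q (e n)) -> convex_position y Q ->
  convex_position (y \o e) (fun _ => True).
Proof.
move=> e_inj Qe cp n G _ uG _ nG [c [c0 c1 cP]].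
have /choice[einv einvK] : forall j, exists i, (exists i', e i' = j) -> e i = j.
  by move=> j; have [[i <-]|] := pselect (exists i, e i = j); [exists i | exists 0%N].
have e_can : cancel e einv by move=> i; apply: e_inj; apply: einvK; exists i.
apply: (cp (e n) (map e G) (Qe n)); rewrite ?map_inj_uniq ?mem_map //.
  by move=> _ /mapP[i _ ->].
exists (c \o einv); rewrite !big_map; split.
- by move=> _ /mapP[i iG ->] /=; rewrite e_can c0.
- by under eq_bigr do rewrite /= e_can.
- by under eq_bigr do rewrite /= e_can.
Qed.

Theorem corollary5p4 (R : realType) (V : lmodType R) (X : set V) :
  ~ finite_set X ->
  (exists f : set nat -> set V,
      join_embedding X nat_fin_interval interval_join f) \/
  (exists f : set nat -> set V,
      join_embedding X nat_fin_subset setU f).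
Proof.
move=> Xinf; have [y y_inj yX] := infinite_inj_seq Xinf.
have [Q [hQ _ Qgeom]] := convex_or_collinear_all y_inj.
have [e Qe e_mono] := unbounded_enum hQ.
have yeX k : X ((y \o e) k) by exact: yX.
case: Qgeom => [cp|[v0 [d [t [d0 t_inc y_line]]]]].
  right; apply: convex_position_embedding yeX _.
  exact: convex_position_comp (incn_inj e_mono) Qe cp.
left; apply: (monotone_line_embedding yeX d0 (tau := t \o e)) => [i j ij|k] /=.
  by apply: t_inc; [exact: Qe | exact: Qe | rewrite (leqW_mono e_mono)].
exact: y_line.
Qed.
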